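(* For every nonnegative integer $r$, $$\sum_{n=1}^{\infty}\frac{n^2}{(2n+2r+1)(2n-1)^2(2n+1)}\frac{\binom{2n}{n}}{\binom{2n+2r}{n+r}}=\frac{1}{2^{2r+1}}\left(\frac{2\wp(2r+2)+\wp(2r)}{8}-\frac{1}{16(r+1)}\right),$$ where $\wp(q)=\int_0^{\pi/2} z\sin^q z\,\mathrm{d}z$. *)

From Stdlib Require Import Reals.
From Coquelicot Require Import Coquelicot.
Open Scope R_scope.

Definition wp (q : nat) : R := RInt (fun z => z * (sin z) ^ q) 0 (PI / 2).

Definition summand (r n : nat) : R :=
  (INR n) ^ 2
  / ((2 * INR n + 2 * INR r + 1) * (2 * INR n - 1) ^ 2 * (2 * INR n + 1))
  * (Binomial.C (2 * n) n / Binomial.C (2 * n + 2 * r) (n + r)).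

From Stdlib Require Import Reals Lra Lia.
From Coquelicot Require Import Coquelicot.
Open Scope R_scope.

(** For r = 0 partial fractions give
    n^2 / ((2n-1)^2 (2n+1)^2) = (1/(2n-1)^2 + 1/(2n+1)^2 + 1/(2n-1) - 1/(2n+1)) / 16,
    so the sum is pi^2/64 once the sum of 1/(2k+1)^2 is known to be pi^2/8.  That sum is
    obtained as in Matsuoka's proof of the Basel problem: the ratios
    Q_k = (int_0^(pi/2) x^2 cos^k x dx) / (int_0^(pi/2) cos^k x dx) satisfy
    Q_k - Q_(k+2) = 2/(k+2)^2 and Q_k -> 0, and Q_1 = pi^2/4 - 2.
    Passing from r to r+1, the summand satisfies a first-order recurrence in r up to a
    telescoping term (a Zeilberger certificate), so the series S_r satisfies
    S_(r+1) = a_r S_r - l_r with l_r the limit of the certificate.  Integration by parts gives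
    (q+2) wp(q+2) = (q+1) wp(q) + 1/(q+2), from which the right-hand side satisfies the
    same recurrence; both agree at r = 0. *)

Lemma continuous_of_ex_derive (f : R -> R) (x : R) : ex_derive f x -> continuous f x.
Proof. exact (ex_derive_continuous (K := R_AbsRing) (V := R_NormedModule) f x). Qed.

Lemma ex_RInt_derivable (f : R -> R) (a b : R) :
  (forall x, ex_derive f x) -> ex_RInt f a b.
Proof.
  intros df. apply (ex_RInt_continuous (V := R_CompleteNormedModule)).
  intros x _. now apply continuous_of_ex_derive.
Qed.

Lemma RInt_derive_eq (F f : R -> R) (a b : R) :
  (forall x, is_derive F x (f x)) -> (forall x, ex_derive f x) ->
  RInt f a b = F b - F a.
Proof.
  intros dF df. apply (is_RInt_unique (V := R_CompleteNormedModule)).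
  apply (is_RInt_derive F f); intros x _; [apply dF | now apply continuous_of_ex_derive].
Qed.

Lemma RInt_lincomb (f g : R -> R) (c d a b : R) :
  ex_RInt f a b -> ex_RInt g a b ->
  RInt (fun x => c * f x + d * g x) a b = c * RInt f a b + d * RInt g a b.
Proof.
  intros hf hg.
  rewrite (RInt_plus (fun x => c * f x) (fun x => d * g x)).
  - now rewrite (RInt_scal f), (RInt_scal g).
  - exact (ex_RInt_scal f a b c hf).
  - exact (ex_RInt_scal g a b d hg).
Qed.

Lemma eq_modulo_sin2_cos2 (x K L M : R) :
  L - M = K * ((sin x)² + (cos x)² - 1) -> L = M.
Proof. rewrite sin2_cos2. lra. Qed.

Ltac derivable_integrand := apply ex_RInt_derivable; intro; auto_derive; auto.

Lemma wp_rec (q : nat) :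
  (INR q + 2) * wp (q + 2) = (INR q + 1) * wp q + / (INR q + 2).
Proof.
  assert (Hq : INR q + 2 <> 0) by (pose proof (pos_INR q); lra).
  assert (Hparts : RInt (fun z => (INR q + 1) * (z * sin z ^ q)
                                  + - (INR q + 2) * (z * sin z ^ (q + 2))) 0 (PI / 2)
                   = - / (INR q + 2)).
  { rewrite (RInt_derive_eq
      (fun z => z * sin z ^ S q * cos z - sin z ^ S (S q) / (INR q + 2))).
    - rewrite sin_PI2, cos_PI2, sin_0, !pow1. simpl. field. exact Hq.
    - intro x. auto_derive; [auto|].
      replace (q + 2)%nat with (S (S q)) by lia.
      (* [auto_derive] has unfolded [INR (S q)] one step. *)
      change (match q with 0%nat => 1 | S _ => INR q + 1 end) with (INR (S q)).
      rewrite S_INR. simpl.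
      apply (eq_modulo_sin2_cos2 x (x * sin x ^ q * (INR q + 1))).
      unfold Rsqr. field. exact Hq.
    - intro x. auto_derive. auto. }
  rewrite RInt_lincomb in Hparts by derivable_integrand.
  unfold wp. lra.
Qed.

Lemma wp_0 : wp 0 = PI ^ 2 / 8.
Proof.
  unfold wp. rewrite (RInt_derive_eq (fun z => z ^ 2 / 2)).
  - field.
  - intro x. auto_derive; [auto|]. simpl. field.
  - intro x. auto_derive. auto.
Qed.

Definition wallis (k : nat) : R := RInt (fun x => cos x ^ k) 0 (PI / 2).
Definition wallis_x2 (k : nat) : R := RInt (fun x => x ^ 2 * cos x ^ k) 0 (PI / 2).

Lemma wallis_rec (k : nat) : wallis (k + 2) = (INR k + 1) / (INR k + 2) * wallis k.
Proof.
  assert (Hk : INR k + 2 <> 0) by (pose proof (pos_INR k); lra).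
  assert (Hparts : RInt (fun x => (INR k + 2) * cos x ^ (k + 2) + - (INR k + 1) * cos x ^ k)
                     0 (PI / 2) = 0).
  { rewrite (RInt_derive_eq (fun x => cos x ^ S k * sin x)).
    - rewrite sin_PI2, cos_PI2, sin_0. simpl. ring.
    - intro x. auto_derive; [auto|].
      replace (k + 2)%nat with (S (S k)) by lia.
      change (match k with 0%nat => 1 | S _ => INR k + 1 end) with (INR (S k)).
      rewrite S_INR. simpl.
      apply (eq_modulo_sin2_cos2 x (- cos x ^ k * (INR k + 1))).
      unfold Rsqr. ring.
    - intro x. auto_derive. auto. }
  rewrite RInt_lincomb in Hparts by derivable_integrand.
  apply (Rmult_eq_reg_l (INR k + 2)); [|exact Hk].
  transitivity ((INR k + 1) * wallis k); [unfold wallis; lra | field; exact Hk].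
Qed.

Lemma wallis_x2_rec (k : nat) :
  (INR k + 2) ^ 2 * wallis_x2 (k + 2)
  = (INR k + 2) * (INR k + 1) * wallis_x2 k - 2 * wallis (k + 2).
Proof.
  assert (Hparts : RInt (fun x => 1 * cos x ^ (k + 2)
                   + 1 * ((INR k + 2) ^ 2 / 2 * (x ^ 2 * cos x ^ (k + 2))
                          + - ((INR k + 2) * (INR k + 1) / 2) * (x ^ 2 * cos x ^ k)))
                     0 (PI / 2) = 0).
  { rewrite (RInt_derive_eq
      (fun x => x * cos x ^ S (S k) + (INR k + 2) * (x ^ 2 / 2) * cos x ^ S k * sin x)).
    - rewrite sin_PI2, cos_PI2, sin_0. simpl. ring.
    - intro x. auto_derive; [auto|].
      replace (k + 2)%nat with (S (S k)) by lia.
      change (match k with 0%nat => 1 | S _ => INR k + 1 end) with (INR (S k)).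
      rewrite !S_INR. simpl.
      apply (eq_modulo_sin2_cos2 x (- (INR k + 2) * (x ^ 2 / 2) * (INR k + 1) * cos x ^ k)).
      unfold Rsqr. field.
    - intro x. auto_derive. auto. }
  rewrite !RInt_lincomb in Hparts by derivable_integrand.
  unfold wallis, wallis_x2. lra.
Qed.

Lemma wallis_1 : wallis 1 = 1.
Proof.
  unfold wallis. rewrite (RInt_derive_eq sin).
  - rewrite sin_PI2, sin_0. ring.
  - intro x. auto_derive; [auto|]. simpl. ring.
  - intro x. auto_derive. auto.
Qed.

Lemma wallis_x2_1 : wallis_x2 1 = PI ^ 2 / 4 - 2.
Proof.
  unfold wallis_x2.
  rewrite (RInt_derive_eq (fun x => x ^ 2 * sin x + 2 * x * cos x - 2 * sin x)).
  - rewrite sin_PI2, cos_PI2, sin_0, cos_0. field.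
  - intro x. auto_derive; [auto|]. simpl. ring.
  - intro x. auto_derive. auto.
Qed.

Lemma wallis_pos (k : nat) : 0 < wallis k.
Proof.
  pose proof PI2_RGT_0.
  apply RInt_gt_0; [lra| |].
  - intros x Hx. apply pow_lt, cos_gt_0; lra.
  - intros x _. apply continuous_of_ex_derive. auto_derive. auto.
Qed.

Lemma x_le_3_sin (x : R) : 0 <= x <= PI / 2 -> x <= 3 * sin x.
Proof.
  intros Hx. pose proof PI_4.
  destruct (pre_sin_bound x 0 ltac:(lra) ltac:(lra)) as [Hsin _].
  unfold sin_approx, sin_term in Hsin. simpl in Hsin.
  nra.
Qed.

Lemma wallis_x2_bound (k : nat) : 0 <= wallis_x2 k <= 9 * (wallis k - wallis (k + 2)).
Proof.
  pose proof PI2_RGT_0.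
  split.
  - apply RInt_ge_0; [lra|derivable_integrand|].
    intros x Hx. apply Rmult_le_pos; [nra|]. apply pow_le, cos_ge_0; lra.
  - assert (Hdiff : RInt (fun x => 9 * cos x ^ k + -9 * cos x ^ (k + 2)) 0 (PI / 2)
                     = 9 * (wallis k - wallis (k + 2))).
    { rewrite RInt_lincomb by derivable_integrand. unfold wallis. lra. }
    rewrite <- Hdiff.
    apply RInt_le; [lra|derivable_integrand|derivable_integrand|].
    intros x Hx.
    assert (Hck : 0 <= cos x ^ k) by (apply pow_le, cos_ge_0; lra).
    assert (Hx2 : x ^ 2 <= 9 * (sin x * sin x)) by (pose proof (x_le_3_sin x); nra).
    assert (Hpyth := sin2_cos2 x). unfold Rsqr in Hpyth.
    replace (k + 2)%nat with (S (S k)) by lia. simpl.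
    nra.
Qed.

Definition wallis_ratio (k : nat) : R := wallis_x2 k / wallis k.

Lemma wallis_ratio_rec (k : nat) :
  wallis_ratio k - wallis_ratio (k + 2) = 2 / (INR k + 2) ^ 2.
Proof.
  pose proof (wallis_pos k). pose proof (pos_INR k).
  assert (EJ : wallis_x2 (k + 2)
               = ((INR k + 2) * (INR k + 1) * wallis_x2 k - 2 * wallis (k + 2))
                 / (INR k + 2) ^ 2)
    by (rewrite <- wallis_x2_rec; field; lra).
  unfold wallis_ratio. rewrite EJ, wallis_rec. field. lra.
Qed.

Lemma wallis_ratio_bound (k : nat) : 0 <= wallis_ratio k <= 9 / (INR k + 2).
Proof.
  pose proof (wallis_pos k). pose proof (pos_INR k).
  destruct (wallis_x2_bound k) as [HJ0 HJ1].
  rewrite wallis_rec in HJ1.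
  unfold wallis_ratio. split.
  - apply Rdiv_le_0_compat; lra.
  - apply Rle_div_l; [lra|].
    replace (9 / (INR k + 2) * wallis k)
      with (9 * (wallis k - (INR k + 1) / (INR k + 2) * wallis k)) by (field; lra).
    exact HJ1.
Qed.

Lemma is_lim_seq_inv_S : is_lim_seq (fun k => / INR (S k)) 0.
Proof.
  assert (H : is_lim_seq (fun k => INR (S k)) p_infty)
    by (apply -> is_lim_seq_incr_1; apply is_lim_seq_INR).
  exact (is_lim_seq_inv _ _ H ltac:(discriminate)).
Qed.

Lemma is_lim_seq_comp_inv_S (f : R -> R) :
  ex_derive f 0 -> is_lim_seq (fun k => f (/ INR (S k))) (f 0).
Proof.
  intros df. apply is_lim_seq_continuous; [|exact is_lim_seq_inv_S].
  apply continuity_pt_filterlim.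
  exact (continuous_of_ex_derive f 0 df).
Qed.

Lemma is_series_telescope (E : nat -> R) (L : R) :
  is_lim_seq E L -> is_series (fun k => E k - E (S k)) (E 0%nat - L).
Proof.
  intros HE.
  assert (Hsum : forall N, sum_n (fun k => E k - E (S k)) N = E 0%nat - E (S N)).
  { induction N as [|N IH].
    - now rewrite sum_O.
    - rewrite sum_Sn, IH. unfold plus. simpl. ring. }
  apply (filterlim_ext (fun N => E 0%nat - E (S N))); [intro N; now rewrite Hsum|].
  apply (is_lim_seq_minus' (fun _ => E 0%nat) (fun N => E (S N))).
  - apply is_lim_seq_const.
  - now apply -> is_lim_seq_incr_1.
Qed.

Lemma wallis_ratio_lim : is_lim_seq wallis_ratio 0.
Proof.
  apply is_lim_seq_le_le with (u := fun _ => 0) (w := fun k => 9 * / INR (S k)).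
  - intro k. destruct (wallis_ratio_bound k) as [H0 H1]. split; [exact H0|].
    rewrite S_INR. pose proof (pos_INR k).
    apply (Rle_trans _ _ _ H1). unfold Rdiv.
    apply Rmult_le_compat_l; [lra|]. apply Rinv_le_contravar; lra.
  - apply is_lim_seq_const.
  - replace 0 with (9 * 0) at 1 by ring.
    exact (is_lim_seq_comp_inv_S (fun u => 9 * u) ltac:(auto_derive; auto)).
Qed.

Lemma sum_odd_inv_squares (N : nat) :
  sum_n (fun k => / (2 * INR k + 1) ^ 2) N = PI ^ 2 / 8 - wallis_ratio (2 * N + 1) / 2.
Proof.
  induction N as [|N IH].
  - rewrite sum_O. unfold wallis_ratio. simpl. rewrite wallis_1, wallis_x2_1. field.
  - rewrite sum_Sn, IH.
    replace (2 * S N + 1)%nat with (2 * N + 1 + 2)%nat by lia.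
    assert (Hrec := wallis_ratio_rec (2 * N + 1)).
    replace (INR (2 * N + 1)) with (2 * INR N + 1) in Hrec
      by (rewrite plus_INR, mult_INR; simpl; ring).
    rewrite S_INR. pose proof (pos_INR N).
    assert (Hinv : / (2 * (INR N + 1) + 1) ^ 2 = 2 / (2 * INR N + 1 + 2) ^ 2 / 2)
      by (field; lra).
    rewrite Hinv. change plus with Rplus. lra.
Qed.

Lemma odd_inv_squares_series : is_series (fun k => / (2 * INR k + 1) ^ 2) (PI ^ 2 / 8).
Proof.
  assert (Hlim : is_lim_seq (fun N => PI ^ 2 / 8 - wallis_ratio (2 * N + 1) / 2)
                            (PI ^ 2 / 8 - 0 / 2)).
  { apply is_lim_seq_minus'; [apply is_lim_seq_const|].
    apply is_lim_seq_div'; [|apply is_lim_seq_const|lra].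
    apply (is_lim_seq_subseq wallis_ratio 0 (fun N => 2 * N + 1)%nat); [|exact wallis_ratio_lim].
    apply eventually_subseq. intro n. lia. }
  replace (PI ^ 2 / 8 - 0 / 2) with (PI ^ 2 / 8) in Hlim by field.
  exact (is_lim_seq_ext _ _ _ (fun N => eq_sym (sum_odd_inv_squares N)) Hlim).
Qed.

Lemma C_neq_0 (n k : nat) : Binomial.C n k <> 0.
Proof.
  unfold Binomial.C. pose proof (INR_fact_neq_0 n). pose proof (INR_fact_neq_0 k).
  pose proof (INR_fact_neq_0 (n - k)).
  apply Rmult_integral_contrapositive_currified; [assumption|].
  apply Rinv_neq_0_compat, Rmult_integral_contrapositive_currified; assumption.
Qed.

Lemma summand_0 (k : nat) :
  summand 0 (S k)
  = / 16 * (/ (2 * INR k + 1) ^ 2 + / (2 * INR (S k) + 1) ^ 2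
            + (/ (2 * INR k + 1) - / (2 * INR (S k) + 1))).
Proof.
  unfold summand. rewrite Nat.mul_0_r, !Nat.add_0_r.
  pose proof (C_neq_0 (2 * S k) (S k)). rewrite S_INR. pose proof (pos_INR k).
  change (INR 0) with 0. field. lra.
Qed.

Lemma series_summand_0 : is_series (fun k => summand 0 (S k)) (PI ^ 2 / 64).
Proof.
  set (a := fun k => / (2 * INR k + 1) ^ 2).
  set (e := fun k => / (2 * INR k + 1)).
  assert (Ha : is_series a (PI ^ 2 / 8)) by exact odd_inv_squares_series.
  assert (Ha1 : is_series (fun k => a (S k)) (PI ^ 2 / 8 - 1)).
  { assert (Ha0 : PI ^ 2 / 8 = PI ^ 2 / 8 - 1 + a 0%nat) by (unfold a; simpl; field).
    rewrite Ha0 in Ha. exact (is_series_incr_1 a _ Ha). }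
  assert (He : is_series (fun k => e k - e (S k)) (1 - 0)).
  { replace 1 with (e 0%nat) by (unfold e; simpl; field).
    apply is_series_telescope.
    assert (Hlim := is_lim_seq_comp_inv_S (fun u => u / (2 - u)) ltac:(auto_derive; lra)).
    cbv beta in Hlim. replace (0 / (2 - 0)) with 0 in Hlim by field.
    apply (is_lim_seq_ext (fun k => / INR (S k) / (2 - / INR (S k)))); [|exact Hlim].
    intro k. unfold e. rewrite S_INR. pose proof (pos_INR k). field. lra. }
  assert (Hsum := is_series_scal (/ 16) _ _
                    (is_series_plus _ _ _ _ (is_series_plus _ _ _ _ Ha Ha1) He)).
  replace (PI ^ 2 / 64) with (/ 16 * (PI ^ 2 / 8 + (PI ^ 2 / 8 - 1) + (1 - 0))) by field.
  apply (is_series_ext _ _ _ (fun k => eq_sym (summand_0 k))).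
  exact Hsum.
Qed.

Lemma C_central_succ (m : nat) :
  Binomial.C (2 * S m) (S m) = 2 * (2 * INR m + 1) / (INR m + 1) * Binomial.C (2 * m) m.
Proof.
  unfold Binomial.C.
  replace (2 * S m - S m)%nat with (S m) by lia.
  replace (2 * m - m)%nat with m by lia.
  replace (2 * S m)%nat with (S (S (2 * m))) by lia.
  rewrite !fact_simpl, !mult_INR, !S_INR, mult_INR. simpl (INR 2).
  pose proof (INR_fact_neq_0 (2 * m)). pose proof (INR_fact_neq_0 m). pose proof (pos_INR m).
  field. lra.
Qed.

Definition central_ratio (r n : nat) : R :=
  Binomial.C (2 * n) n / Binomial.C (2 * n + 2 * r) (n + r).

Lemma central_ratio_0 (n : nat) : central_ratio 0 n = 1.
Proof.
  unfold central_ratio. rewrite Nat.mul_0_r, !Nat.add_0_r.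
  field. apply C_neq_0.
Qed.

Lemma central_ratio_succ_r (r n : nat) :
  central_ratio (S r) n
  = (INR n + INR r + 1) / (2 * (2 * INR n + 2 * INR r + 1)) * central_ratio r n.
Proof.
  unfold central_ratio.
  replace (2 * n + 2 * S r)%nat with (2 * S (n + r))%nat by lia.
  rewrite Nat.add_succ_r, C_central_succ, plus_INR.
  replace (2 * (n + r))%nat with (2 * n + 2 * r)%nat by lia.
  pose proof (C_neq_0 (2 * n + 2 * r) (n + r)). pose proof (pos_INR n). pose proof (pos_INR r).
  field. lra.
Qed.

Lemma central_ratio_succ_n (r n : nat) :
  central_ratio r (S n)
  = (2 * INR n + 1) * (INR n + INR r + 1) / ((INR n + 1) * (2 * INR n + 2 * INR r + 1))
    * central_ratio r n.
Proof.
  unfold central_ratio.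
  replace (2 * S n + 2 * r)%nat with (2 * S (n + r))%nat by lia.
  rewrite Nat.add_succ_l, !C_central_succ, plus_INR.
  replace (2 * (n + r))%nat with (2 * n + 2 * r)%nat by lia.
  pose proof (C_neq_0 (2 * n + 2 * r) (n + r)). pose proof (pos_INR n). pose proof (pos_INR r).
  field. lra.
Qed.

Lemma central_ratio_lim (r : nat) : is_lim_seq (fun k => central_ratio r (S k)) (/ 4 ^ r).
Proof.
  induction r as [|r IH].
  - apply (is_lim_seq_ext (fun _ => 1)); [intro k; now rewrite central_ratio_0|].
    replace (/ 4 ^ 0) with 1 by (simpl; field). apply is_lim_seq_const.
  - pose proof (pos_INR r).
    set (h := fun u => (1 + (INR r + 1) * u) / (2 * (2 + (2 * INR r + 1) * u))).
    assert (Hh := is_lim_seq_comp_inv_S h ltac:(unfold h; auto_derive; lra)).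
    replace (/ 4 ^ S r) with (/ 4 ^ r * h 0) by (unfold h; simpl; field; apply pow_nonzero; lra).
    apply (is_lim_seq_ext (fun k => central_ratio r (S k) * h (/ INR (S k)))).
    + intro k. rewrite central_ratio_succ_r. unfold h.
      rewrite S_INR. pose proof (pos_INR k). field. lra.
    + exact (is_lim_seq_mult' _ _ _ _ IH Hh).
Qed.

Definition step_factor (r : nat) : R :=
  (3 * INR r + 5) * (2 * INR r + 1) / (8 * (INR r + 2) * (3 * INR r + 2)).

(* A creative-telescoping (Zeilberger) certificate. *)
Definition certificate (r n : nat) : R :=
  - central_ratio r n * (INR n * (INR n - 1) * ((3 * INR r + 4) * INR n - (INR r + 1)))
  / (8 * (3 * INR r + 2) * (INR r + 2) ^ 2 * (2 * INR n - 1) ^ 2 * (2 * INR n + 2 * INR r + 1)).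

Definition certificate_limit (r : nat) : R :=
  - (3 * INR r + 4) / (64 * 4 ^ r * (3 * INR r + 2) * (INR r + 2) ^ 2).

Lemma summand_succ_r (r n : nat) : (1 <= n)%nat ->
  summand (S r) n = step_factor r * summand r n + certificate r n - certificate r (S n).
Proof.
  intros Hn. apply le_INR in Hn. simpl (INR 1) in Hn. pose proof (pos_INR r).
  unfold summand, certificate, step_factor.
  fold (central_ratio (S r) n) (central_ratio r n).
  rewrite central_ratio_succ_r, central_ratio_succ_n, !S_INR.
  field. lra.
Qed.

Lemma certificate_1 (r : nat) : certificate r 1 = 0.
Proof.
  unfold certificate. simpl (INR 1). pose proof (pos_INR r).
  field. repeat split; lra.
Qed.

Lemma certificate_lim (r : nat) :
  is_lim_seq (fun k => certificate r (S k)) (certificate_limit r).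
Proof.
  pose proof (pos_INR r).
  set (g := fun u => - ((1 - u) * ((3 * INR r + 4) - (INR r + 1) * u))
                     / ((2 - u) ^ 2 * (2 + (2 * INR r + 1) * u))
                     / (8 * (3 * INR r + 2) * (INR r + 2) ^ 2)).
  assert (Hg := is_lim_seq_comp_inv_S g ltac:(unfold g; auto_derive; repeat split; nra)).
  replace (certificate_limit r) with (/ 4 ^ r * g 0)
    by (unfold g, certificate_limit; field; repeat split; try nra; apply pow_nonzero; lra).
  apply (is_lim_seq_ext (fun k => central_ratio r (S k) * g (/ INR (S k)))).
  - intro k. unfold certificate, g. rewrite S_INR. pose proof (pos_INR k).
    assert (Hu : 0 < / (INR k + 1) <= 1)
      by (split; [apply Rinv_0_lt_compat | rewrite <- Rinv_1; apply Rinv_le_contravar]; lra).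
    field. repeat split; nra.
  - exact (is_lim_seq_mult' _ _ _ _ (central_ratio_lim r) Hg).
Qed.

Lemma series_summand_succ (r : nat) (s : R) :
  is_series (fun k => summand r (S k)) s ->
  is_series (fun k => summand (S r) (S k)) (step_factor r * s - certificate_limit r).
Proof.
  intros Hs.
  assert (Htel := is_series_telescope (fun k => certificate r (S k)) _ (certificate_lim r)).
  cbv beta in Htel. rewrite certificate_1 in Htel.
  assert (Hsum := is_series_plus _ _ _ _ (is_series_scal (step_factor r) _ _ Hs) Htel).
  replace (step_factor r * s - certificate_limit r)
    with (step_factor r * s + (0 - certificate_limit r)) by ring.
  refine (is_series_ext _ _ _ _ Hsum). intro k.
  rewrite (summand_succ_r r (S k)) by lia.
  unfold plus, scal. simpl. unfold mult. simpl. ring.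
Qed.

Definition wp_rhs (r : nat) : R :=
  / 2 ^ (2 * r + 1) * ((2 * wp (2 * r + 2) + wp (2 * r)) / 8 - / (16 * (INR r + 1))).

Lemma wp_rhs_0 : wp_rhs 0 = PI ^ 2 / 64.
Proof.
  unfold wp_rhs. simpl.
  assert (H2 := wp_rec 0). simpl in H2. rewrite wp_0 in *.
  replace (wp 2) with (PI ^ 2 / 16 + / 4) by lra.
  field.
Qed.

Lemma wp_rhs_succ (r : nat) :
  wp_rhs (S r) = step_factor r * wp_rhs r - certificate_limit r.
Proof.
  pose proof (pos_INR r).
  assert (E0 : wp (2 * r + 2)
               = ((2 * INR r + 1) * wp (2 * r) + / (2 * INR r + 2)) / (2 * INR r + 2)).
  { replace (2 * INR r + 1) with (INR (2 * r) + 1) by (rewrite mult_INR; simpl; ring).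
    replace (2 * INR r + 2) with (INR (2 * r) + 2) by (rewrite mult_INR; simpl; ring).
    rewrite <- wp_rec. field. pose proof (pos_INR (2 * r)). lra. }
  assert (E1 : wp (2 * r + 2 + 2)
               = ((2 * INR r + 3) * wp (2 * r + 2) + / (2 * INR r + 4)) / (2 * INR r + 4)).
  { replace (2 * INR r + 3) with (INR (2 * r + 2) + 1)
      by (rewrite plus_INR, mult_INR; simpl; ring).
    replace (2 * INR r + 4) with (INR (2 * r + 2) + 2)
      by (rewrite plus_INR, mult_INR; simpl; ring).
    rewrite <- wp_rec. field. pose proof (pos_INR (2 * r + 2)). lra. }
  unfold wp_rhs, step_factor, certificate_limit.
  replace (2 * S r + 2)%nat with (2 * r + 2 + 2)%nat by lia.
  replace (2 * S r)%nat with (2 * r + 2)%nat by lia.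
  replace (2 * S r + 1)%nat with (2 * r + 1 + 2)%nat by lia.
  replace (4 ^ r) with (2 ^ (2 * r)) by (rewrite pow_mult; simpl; f_equal; ring).
  rewrite E1, E0, !pow_add, S_INR.
  assert (0 < 2 ^ (2 * r)) by (apply pow_lt; lra).
  field. lra.
Qed.

Theorem theorem5p0p3 (r : nat) :
  is_series (fun k : nat => summand r (S k))
    (/ 2 ^ (2 * r + 1)
     * ((2 * wp (2 * r + 2) + wp (2 * r)) / 8 - / (16 * (INR r + 1)))).
Proof.
  change (is_series (fun k => summand r (S k)) (wp_rhs r)).
  induction r as [|r IH].
  - rewrite wp_rhs_0. exact series_summand_0.
  - rewrite wp_rhs_succ. exact (series_summand_succ r _ IH).
Qed.
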